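(* Let $\pi$ be a (not necessarily unique) QSD of $(X_t)_{0\le t<\tau_\partial}$, $\lambda=\lambda(\pi)$, and assume the combined Dobrushin and reverse Dobrushin condition (DRD) holds with set $A$, constants $c_0,c_1>0$ and times $t_0,t_1>0$. Define $t_3:=t_0+t_1$ and $c_3:=\lambda^{t_0}c_0c_1/\pi(A)$. Then $$\frac{P_{t_3}(x,\cdot)}{P_{t_3}1(x)}\ge c_3\,\pi(\cdot)\quad\text{for every }x\in\chi .$$
   Context: $\chi$ is a metric space with Borel $\sigma$-algebra; $\partial\notin\chi$ is a cemetery point. $(X_t)_{0\le t<\tau_\partial}$ is a killed Markov process on $\chi$ in discrete or continuous time, absorption time $\tau_\partial=\inf\{t\ge0:X_t=\partial\}$, submarkovian semigroup $P_t(x,A)=\mathbb P_x(X_t\in A,\tau_\partial>t)$; $K1(x)=K(x,\chi)$ for a kernel $K$. A QSD is a probability measure $\pi$ with $\mathbb P_\pi(X_t\in\cdot\mid\tau_\partial>t)=\pi$ for all $t$; $\lambda(\pi):=\mathbb P_\pi(\tau_\partial>1)$. Reverse Dobrushin condition (RD): there exist $t_0>0$ and a submarkovian kernel $R$ with $\pi(dx)P_{t_0}(x,dy)=\pi(dy)R(y,dx)$ as measures on $\chi\times\chi$, and $c_0>0$, $\nu\in\mathcal P(\chi)$ with $R(y,\cdot)/R1(y)\ge c_0\nu(\cdot)$ for $\pi$-a.e. $y$. Condition (DRD): there are a Borel set $A\subseteq\chi$, a probability measure $\nu_1$ with $\nu_1(\chi\setminus A)=0$, $c_1>0$ and $t_1>0$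 such that $P_{t_1}1(x)>0$ for all $x$ and $P_{t_1}(x,\cdot)/P_{t_1}1(x)\ge c_1\nu_1(\cdot)$ for all $x\in\chi$ (this forces $\pi(A)>0$); and (RD) holds with $\nu:=\pi|_A/\pi(A)$ and some $c_0>0$, $t_0>0$. *)

From HB Require Import structures.
From mathcomp Require Import all_boot all_order all_algebra.
From mathcomp Require Import all_classical all_reals all_analysis.
Set Implicit Arguments. Unset Strict Implicit. Unset Printing Implicit Defensive.
Import Order.TTheory GRing.Theory Num.Theory.
Local Open Scope classical_set_scope.
Local Open Scope ring_scope.

Definition borel_space (T : ptopologicalType) := g_sigma_algebraType (@open T).

Section defs.
Variables (R : realType) (T : ptopologicalType).
Local Notation X := (borel_space T).

Definition is_time (disc : bool) (t : R) : Prop :=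
  if disc then exists n : nat, t = n%:R else 0 <= t.

(* (P_t)_t is the submarkovian semigroup of a killed Markov process:
   P_t(x, A) = P_x(X_t in A, tau > t); each P_t is a subprobability kernel,
   P_0 = identity, and Chapman-Kolmogorov holds on the time set. *)
Definition submarkov_semigroup (disc : bool) (P : R -> R.-spker X ~> X) : Prop :=
  (forall (x : X) (A : set X), measurable A -> P 0 x A = dirac x A) /\
  (forall s t, is_time disc s -> is_time disc t ->
     forall (x : X) (A : set X), measurable A ->
       P (s + t) x A = (\int[P s x]_y P t y A)%E).

(* pi is a QSD: P_pi(tau > t) > 0 and P_pi(X_t in A | tau > t) = pi(A). *)
Definition is_QSD (disc : bool) (P : R -> R.-spker X ~> X)
    (pi : probability X R) : Prop :=
  forall t, is_time disc t ->
    (0 < \int[pi]_x P t x setT)%E /\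
    forall A : set X, measurable A ->
      (\int[pi]_x P t x A = (\int[pi]_x P t x setT) * pi A)%E.

(* lambda(pi) = P_pi(tau > 1) *)
Definition lambda (P : R -> R.-spker X ~> X) (pi : probability X R) : R :=
  fine (\int[pi]_x P (1%R) x setT)%E.

Definition reverse_dobrushin (disc : bool) (P : R -> R.-spker X ~> X)
    (pi : probability X R) (t0 c0 : R) (nu : set X -> \bar R) : Prop :=
  is_time disc t0 /\ 0 < t0 /\ 0 < c0 /\
  exists Rk : R.-spker X ~> X,
    (forall C : set (X * X)%type, measurable C ->
       (\int[pi]_x \int[P t0 x]_y (\1_C (x, y))%:E
        = \int[pi]_y \int[Rk y]_x (\1_C (x, y))%:E)%E) /\
    {ae pi, forall y : X, (0 < Rk y setT)%E /\
       forall B : set X, measurable B -> (c0%:E * Rk y setT * nu B <= Rk y B)%E}.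

Definition restr_norm (pi : probability X R) (A : set X) : set X -> \bar R :=
  fun B => (fine (pi (A `&` B)) / fine (pi A))%:E.

Definition DRD (disc : bool) (P : R -> R.-spker X ~> X) (pi : probability X R)
    (A : set X) (c0 c1 t0 t1 : R) : Prop :=
  measurable A /\
  (exists nu1 : probability X R,
     nu1 (~` A) = 0%E /\ is_time disc t1 /\ 0 < t1 /\ 0 < c1 /\
     forall x : X, (0 < P t1 x setT)%E /\
       forall B : set X, measurable B ->
         (c1%:E * P t1 x setT * nu1 B <= P t1 x B)%E) /\
  reverse_dobrushin disc P pi t0 c0 (restr_norm pi A).

End defs.

From HB Require Import structures.
From mathcomp Require Import all_boot all_order all_algebra.
From mathcomp Require Import all_classical all_reals all_analysis.
From mathcomp Require Import measurable_realfun ring.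
Import Order.TTheory GRing.Theory Num.Theory.
Local Open Scope classical_set_scope.
Local Open Scope ring_scope.

(* Write F(t) = P_pi(tau > t).  The proof has three ingredients.
   1. Since pi is a QSD, pi P_t = F(t) pi; with the semigroup property F is
      multiplicative on the time set, with values in (0,1], hence
      lambda^t0 = F(1)^t0 <= F(t0) (an elementary argument on multiplicative
      functions, needed in continuous time where F is not assumed measurable).
   2. Reverse Dobrushin, transported through the balance equation
      pi(dx) P_t0(x,dy) = pi(dy) R(y,dx), gives for D inside A
        \int_D P_t0(x,B) pi(dx) >= K(B) pi(D),  K(B) = c0 F(t0) pi(B) / pi(A),
      so P_t0(., B) >= K(B) pi-a.e. on A.  Integrating the Dobrushin condition
      at t1 against pi shows c1 nu1 <= pi, so this also holds nu1-a.e.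
   3. Chapman-Kolmogorov then gives
        P_t3(x,B) >= K(B) P_t1(x, {P_t0(.,B) >= K(B)}) >= K(B) c1 P_t1(x,X),
      and the theorem follows from P_t3(x,X) <= P_t1(x,X) and step 1.
   The file first proves the general measure-theoretic facts, then the facts
   on multiplicative functions, then steps 1-3, and the theorem last. *)

Section measure_facts.
Context {d} {X : measurableType d} {R : realType}.
Implicit Types (m : {measure set X -> \bar R}) (f : X -> \bar R).
Local Open Scope ereal_scope.

Lemma integral_indic_setXl m (D E : set X) (x : X) : measurable E ->
  \int[m]_y (\1_(D `*` E) (x, y))%:E = (\1_D x)%:E * m E.
Proof.
move=> mE; have [Dx|nDx] := pselect (D x).
  rewrite indicE mem_set // mul1e -[in RHS](setIT E) -integral_indic //.
  apply: eq_integral => y _; congr (_%:E); rewrite !indicE.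
  have [Ey|nEy] := pselect (E y); first by rewrite !mem_set.
  by rewrite !memNset // => -[].
rewrite indicE memNset // mul0e integral0_eq // => y _.
by rewrite indicE memNset // => -[].
Qed.

Lemma integral_indic_setXr m (D E : set X) (y : X) : measurable D ->
  \int[m]_x (\1_(D `*` E) (x, y))%:E = (\1_E y)%:E * m D.
Proof.
move=> mD; have [Ey|nEy] := pselect (E y).
  rewrite indicE mem_set // mul1e -[in RHS](setIT D) -integral_indic //.
  apply: eq_integral => x _; congr (_%:E); rewrite !indicE.
  have [Dx|nDx] := pselect (D x); first by rewrite !mem_set.
  by rewrite !memNset // => -[].
rewrite indicE memNset // mul0e integral0_eq // => x _.
by rewrite indicE memNset // => -[].
Qed.

Lemma integral_restrict_indic m (D : set X) f :
  \int[m]_(x in D) f x = \int[m]_x ((\1_D x)%:E * f x).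
Proof.
by rewrite integral_mkcond epatch_indic; apply: eq_integral => x _; rewrite muleC.
Qed.

Lemma le_measure_integral m {U : set X} {f} {a : R} : measurable U ->
  measurable_fun [set: X] f -> (forall x, 0 <= f x) -> (0 <= a)%R ->
  (forall x, U x -> a%:E <= f x) -> a%:E * m U <= \int[m]_x f x.
Proof.
move=> mU mf f0 a0 aU; rewrite -integral_cst //.
apply: (@le_trans _ _ (\int[m]_(x in U) f x)).
  apply: ge0_le_integral => //; first exact: measurable_funS mf.
by apply: ge0_subset_integral => // x _; exact: f0.
Qed.

Lemma measure0_of_integral_bound m {D : set X} {f} {a b : R} :
  measurable D -> m D < +oo -> measurable_fun D f -> (forall x, 0 <= f x) ->
  (a < b)%R -> (forall x, D x -> f x <= a%:E) ->
  b%:E * m D <= \int[m]_(x in D) f x -> m D = 0.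
Proof.
move=> mD Dfin mf f0 ab fa hb.
have up : \int[m]_(x in D) f x <= a%:E * m D.
  by rewrite -integral_cst //; apply: ge0_le_integral.
have := le_trans hb up; rewrite -(@fineK _ (m D)); last first.
  by rewrite ge0_fin_numE.
rewrite -!EFinM lee_fin => h; congr (_%:E); apply/eqP.
rewrite eq_le fine_ge0 // andbT.
have : ((b - a) * fine (m D) <= 0)%R by rewrite mulrBl subr_le0.
by rewrite pmulr_rle0 // subr_gt0.
Qed.

Lemma probability_fineK (p : probability X R) {U : set X} : measurable U ->
  (fine (p U))%:E = p U.
Proof.
move=> mU; rewrite fineK // ge0_fin_numE //.
exact: le_lt_trans (probability_le1 p mU) (ltey _).
Qed.

End measure_facts.

Section kernel_facts.
Context {d} {X : measurableType d} {R : realType}.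
Local Open Scope ereal_scope.

Lemma integral_scaled_invariant (k : R.-spker X ~> X) (pi : probability X R)
    (a : R) : (0 <= a)%R ->
  (forall U, measurable U -> \int[pi]_y k y U = a%:E * pi U) ->
  forall h : X -> \bar R, (forall z, 0 <= h z) -> measurable_fun [set: X] h ->
  \int[pi]_y \int[k y]_z h z = a%:E * \int[pi]_z h z.
Proof.
move=> a0 hk h h0 mh.
have [[x0 _]|nX] := pselect (exists x : X, True); last first.
  by rewrite !integral0_eq ?mule0 // => x; exfalso; apply: nX; exists x.
pose l := kprobability (measurable_cst (pi : pprobability X R)
  : measurable_fun setT (fun _ : X => (pi : pprobability X R))).
have := @integral_kcomp _ _ _ X X X R l (kernel.kernel_snd (T0 := X) k) x0 h h0 mh.
rewrite /= => <-.
rewrite (eq_measure_integral (mscale (NngNum a0) pi)); last first.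
  by move=> U mU _; rewrite /kcomp /= /mscale /= -hk.
exact: ge0_integral_mscale.
Qed.

Lemma integral_mass_le (m : {measure set X -> \bar R}) (k : R.-spker X ~> X) :
  \int[m]_y k y setT <= m setT.
Proof.
apply: (@le_trans _ _ (\int[m]_y (cst 1) y)).
  apply: ge0_le_integral => //; last by move=> y _; exact: sprob_kernel_le1.
  exact: measurable_kernel.
by rewrite integral_cst // mul1e.
Qed.

End kernel_facts.

Section reversed_kernel.
Context {d} {X : measurableType d} {R : realType}.
Local Open Scope ereal_scope.
Variables (pi : probability X R) (Q Rk : R.-spker X ~> X).

(* [Rk] is the time reversal of [Q] under [pi]:
   pi(dx) Q(x,dy) = pi(dy) Rk(y,dx) as measures on X * X. *)
Hypothesis balance : forall C : set (X * X)%type, measurable C ->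
  \int[pi]_x \int[Q x]_y (\1_C (x, y))%:E =
  \int[pi]_y \int[Rk y]_x (\1_C (x, y))%:E.

Lemma balance_rect {D E : set X} : measurable D -> measurable E ->
  \int[pi]_(x in D) Q x E = \int[pi]_(y in E) Rk y D.
Proof.
move=> mD mE; rewrite (integral_restrict_indic pi D) (integral_restrict_indic pi E).
transitivity (\int[pi]_x \int[Q x]_y (\1_(D `*` E) (x, y))%:E).
  by apply: eq_integral => x _; rewrite integral_indic_setXl.
rewrite balance; last exact: measurableX.
by apply: eq_integral => y _; rewrite integral_indic_setXr.
Qed.

Variables (c0 : R) (nu : set X -> \bar R).
Hypothesis c0_ge0 : (0 <= c0)%R.

Hypothesis minorization : {ae pi, forall y, 0 < Rk y setT /\
  forall B, measurable B -> c0%:E * Rk y setT * nu B <= Rk y B}.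

(* Transported through the balance equation, the minorization of [Rk] says that
   [D |-> \int_D Q(x,B) pi(dx)] dominates [c0 nu] times its total mass. *)
Lemma reverse_minorization {D B : set X} : measurable D -> measurable B ->
  0 <= nu D -> c0%:E * nu D * \int[pi]_x Q x B <= \int[pi]_(x in D) Q x B.
Proof.
move=> mD mB nuD0.
have mRk : measurable_fun B (fun y => Rk y setT).
  exact/measurable_funS/(measurable_kernel Rk setT measurableT).
rewrite (balance_rect measurableT mB) (balance_rect mD mB).
rewrite -ge0_integralZl //; last by rewrite mule_ge0.
apply: ae_ge0_le_integral => //.
- by move=> y _; rewrite !mule_ge0.
- exact: measurable_funeM.
- exact/measurable_funS/(measurable_kernel Rk D mD).
apply: filterS minorization => y [_ hy] _.
by rewrite muleAC hy.
Qed.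

End reversed_kernel.
Arguments reverse_minorization {d X R pi Q Rk} balance {c0 nu} c0_ge0 minorization {D B}.

Lemma ratio_le_of_geometric {R : realType} {a b c : R} : 0 < c -> 0 < a ->
  0 <= b -> (forall n, a ^+ n * c <= b ^+ n) -> a <= b.
Proof.
move=> c0 a0 b0 dom; rewrite leNgt; apply/negP => ba.
have r_lt1 : `|b / a| < 1.
  rewrite ger0_norm; last by rewrite divr_ge0 // ltW.
  by rewrite ltr_pdivrMr // mul1r.
have [N _ HN] := cvgr_lt 0 (cvg_expr r_lt1) c c0.
have := HN N (leqnn N); rewrite /= expr_div_n ltr_pdivrMr ?exprn_gt0 //.
by rewrite ltNge mulrC dom.
Qed.

Lemma is_time_nat {R : realType} disc (n : nat) : is_time disc (n%:R : R).
Proof. by case: disc => /=; [exists n | exact: ler0n]. Qed.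

Section multiplicative_on_times.
Variables (R : realType) (disc : bool) (F : R -> R).
Hypothesis F_range : forall t, is_time disc t -> 0 < F t <= 1.
Hypothesis F_mul : forall s t, is_time disc s -> is_time disc t ->
  F (s + t) = F s * F t.

Let time1 : is_time disc (1 : R) := is_time_nat disc 1.

(* F(0) = 1, since F(0) = F(0)^2 > 0. *)
Lemma mult_time0 : F 0 = 1.
Proof.
have t0 : is_time disc (0 : R) := is_time_nat disc 0.
have /andP[F0_gt0 _] := F_range _ t0.
have := F_mul _ _ t0 t0; rewrite addr0 => /eqP.
by rewrite -subr_eq0 -{1}(mulr1 (F 0)) -mulrBr mulf_eq0 gt_eqF //= subr_eq0 => /eqP <-.
Qed.

Lemma mult_time_nat (n : nat) : F n%:R = F 1 ^+ n.
Proof.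
elim: n => [|n IH]; first by rewrite mult_time0 expr0.
by rewrite exprSr -IH -F_mul ?natr1 //; exact: is_time_nat.
Qed.

(* F is nonincreasing, as it is bounded by 1. *)
Lemma mult_time_antitone s t : is_time disc s -> is_time disc t ->
  F (s + t) <= F s.
Proof.
move=> hs ht; rewrite F_mul //.
have /andP[Fs_gt0 _] := F_range _ hs; have /andP[_ Ft_le1] := F_range _ ht.
by rewrite ler_piMr // ltW.
Qed.

Hypothesis continuous_time : ~~ disc.

Let time_ge0 (t : R) : 0 <= t -> is_time disc t.
Proof. by move: continuous_time; case: disc. Qed.

Lemma mult_time_multiple t (n : nat) : 0 <= t -> F (n%:R * t) = F t ^+ n.
Proof.
move=> t0; elim: n => [|n IH]; first by rewrite mul0r mult_time0 expr0.
rewrite exprSr -IH -F_mul; first by rewrite -natr1 mulrDl mul1r.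
- by apply: time_ge0; rewrite mulr_ge0.
- exact: time_ge0.
Qed.

(* Comparing F(n t) with F at the first integer m > n t gives
   F(1)^(n t) F(1) <= F(1)^m <= F(n t) = F(t)^n. *)
Lemma mult_time_powR_geometric t (n : nat) : 0 <= t ->
  (F 1 `^ t) ^+ n * F 1 <= F t ^+ n.
Proof.
move=> t0; have /andP[F1_gt0 F1_le1] := F_range 1 (is_time_nat disc 1).
set x := n%:R * t; have x0 : 0 <= x by rewrite mulr_ge0.
set m := (Num.truncn x).+1.
have x_lt_m : x < m%:R by exact: truncnS_gt.
have m_le : m%:R <= x + 1 by rewrite /m mulrS addrC lerD2r truncn_le.
have Fm_le : F m%:R <= F x.
  have -> : (m%:R : R) = x + (m%:R - x) by rewrite addrC subrK.
  by apply: mult_time_antitone; apply: time_ge0; rewrite // subr_ge0 ltW.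
rewrite -mult_time_multiple //; apply: le_trans Fm_le; rewrite mult_time_nat.
rewrite -(powR_mulrn _ (powR_ge0 _ _)) -powRrM -(powR_mulrn _ (ltW F1_gt0)).
rewrite -[X in _ * X <= _](powRr1 (ltW F1_gt0)) -powRD; last first.
  by rewrite (gt_eqF F1_gt0) implybT.
by apply: ger_powR; [rewrite F1_gt0 F1_le1 | rewrite mulrC].
Qed.

End multiplicative_on_times.
Arguments mult_time_nat {R disc F}.
Arguments mult_time_powR_geometric {R disc F}.

(* A multiplicative function on the time set with values in (0,1] satisfies
   F(1)^t <= F(t): directly in discrete time, and in continuous time by
   comparing the geometric sequences F(1)^(n t) and F(t)^n. *)
Lemma mult_time_powR {R : realType} {disc : bool} {F : R -> R} :
  (forall t, is_time disc t -> 0 < F t <= 1) ->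
  (forall s t, is_time disc s -> is_time disc t -> F (s + t) = F s * F t) ->
  forall t, is_time disc t -> F 1 `^ t <= F t.
Proof.
move=> F_range F_mul t ht; have /andP[F1_gt0 F1_le1] := F_range 1 (is_time_nat disc 1).
case: disc ht F_range F_mul => [[n ->]|/= t0] F_range F_mul.
  by rewrite (mult_time_nat F_range F_mul) powR_mulrn // ltW.
have /andP[Ft_gt0 _] := F_range t t0.
apply: (ratio_le_of_geometric F1_gt0); [exact: powR_gt0 | exact: ltW |].
by move=> n; exact: (mult_time_powR_geometric (disc:=false) F_range F_mul isT).
Qed.

Section survival.
Context {d} {X : measurableType d} {R : realType}.
Local Open Scope ereal_scope.

Definition survival (P : R -> R.-spker X ~> X) (pi : probability X R) (t : R)
  : R := fine (\int[pi]_x P t x setT).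

Variables (P : R -> R.-spker X ~> X) (pi : probability X R).

Lemma mass_integral_le1 t : \int[pi]_x P t x setT <= 1.
Proof. exact: le_trans (integral_mass_le pi (P t)) (probability_le1 pi measurableT). Qed.

Lemma survival_EFin t : \int[pi]_x P t x setT = (survival P pi t)%:E.
Proof.
rewrite fineK // ge0_fin_numE; first exact: le_lt_trans (mass_integral_le1 t) (ltey _).
exact: integral_ge0.
Qed.

Lemma survival_le1 t : (survival P pi t <= 1)%R.
Proof. by rewrite -lee_fin -survival_EFin mass_integral_le1. Qed.

End survival.

Section survival_of_QSD.
Variables (R : realType) (T : ptopologicalType) (disc : bool).
Local Notation X := (borel_space T).
Variables (P : R -> R.-spker X ~> X) (pi : probability X R).
Local Open Scope ereal_scope.

Hypothesis semigroup : submarkov_semigroup disc P.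

Lemma semigroup_mass_antitone s t x : is_time disc s -> is_time disc t ->
  P (s + t) x setT <= P s x setT.
Proof.
by move=> hs ht; rewrite semigroup.2 //; exact: integral_mass_le.
Qed.

Hypothesis qsd : is_QSD disc P pi.

Lemma QSD_survival t U : is_time disc t -> measurable U ->
  \int[pi]_x P t x U = (survival P pi t)%:E * pi U.
Proof. by move=> ht mU; have [_ ->] := qsd t ht; rewrite // survival_EFin. Qed.

Lemma QSD_survival_range t : is_time disc t -> (0 < survival P pi t <= 1)%R.
Proof.
move=> ht; rewrite survival_le1 andbT -lte_fin -survival_EFin.
by have [] := qsd t ht.
Qed.

Lemma survival_mul s t : is_time disc s -> is_time disc t ->
  survival P pi (s + t) = (survival P pi s * survival P pi t)%R.
Proof.
move=> hs ht; apply: EFin_inj.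
rewrite EFinM -[in LHS]survival_EFin -[X in (_ * X)%E]survival_EFin.
transitivity (\int[pi]_y \int[P s y]_z P t z setT).
  by apply: eq_integral => y _; rewrite semigroup.2.
have /andP[/ltW Fs_ge0 _] := QSD_survival_range _ hs.
apply: integral_scaled_invariant => //; last exact: measurable_kernel.
by move=> U mU; rewrite QSD_survival.
Qed.

Lemma lambda_powR_le_survival t : is_time disc t ->
  (lambda P pi `^ t <= survival P pi t)%R.
Proof.
exact: (mult_time_powR QSD_survival_range survival_mul).
Qed.

End survival_of_QSD.
Arguments semigroup_mass_antitone {R T disc P}.
Arguments QSD_survival {R T disc P pi}.
Arguments QSD_survival_range {R T disc P pi}.
Arguments lambda_powR_le_survival {R T disc P pi}.

Section DRD_lower_bound.
Variables (R : realType) (T : ptopologicalType) (disc : bool).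
Local Notation X := (borel_space T).
Variables (P : R -> R.-spker X ~> X) (pi : probability X R).
Variables (A : set X) (c0 c1 t0 t1 : R).
Variables (nu1 : probability X R) (Rk : R.-spker X ~> X).
Local Notation F := (survival P pi).
Local Open Scope ereal_scope.

Hypothesis semigroup : submarkov_semigroup disc P.
Hypothesis qsd : is_QSD disc P pi.
Hypothesis mA : measurable A.
Hypothesis time_t0 : is_time disc t0.
Hypothesis time_t1 : is_time disc t1.
Hypothesis c0_gt0 : (0 < c0)%R.
Hypothesis c1_gt0 : (0 < c1)%R.

Hypothesis nu1_A : nu1 (~` A) = 0.
Hypothesis dobrushin : forall x, 0 < P t1 x setT /\
  forall B, measurable B -> c1%:E * P t1 x setT * nu1 B <= P t1 x B.

Hypothesis balance : forall C : set (X * X)%type, measurable C ->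
  \int[pi]_x \int[P t0 x]_y (\1_C (x, y))%:E =
  \int[pi]_y \int[Rk y]_x (\1_C (x, y))%:E.
Hypothesis minorization : {ae pi, forall y, 0 < Rk y setT /\
  forall B, measurable B -> c0%:E * Rk y setT * restr_norm pi A B <= Rk y B}.

(* Integrating the Dobrushin minorization against the QSD: c1 nu1 <= pi. *)
Lemma nu1_le_pi U : measurable U -> c1%:E * nu1 U <= pi U.
Proof.
move=> mU; have /andP[Ft1_gt0 _] := QSD_survival_range qsd _ time_t1.
rewrite -(lee_pmul2r (x := (F t1)%:E)) // (muleC (pi U)) -(QSD_survival qsd) //.
rewrite -survival_EFin -ge0_integralZl //; first last.
- by rewrite mule_ge0 // lee_fin ltW.
- exact: measurable_kernel.
apply: ge0_le_integral => //.
- by move=> y _; rewrite !mule_ge0 // ltW.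
- by apply: measurable_funeM; exact: measurable_kernel.
- exact: measurable_kernel.
- by move=> y _; have [_ h] := dobrushin y; rewrite muleAC h.
Qed.

(* The lower bound for P_t0(., B) on A that reverse Dobrushin provides. *)
Let K (B : set X) : R := (c0 * F t0 * fine (pi B) / fine (pi A))%R.

Lemma density_lower_bound B D : measurable B -> measurable D -> D `<=` A ->
  (K B)%:E * pi D <= \int[pi]_(x in D) P t0 x B.
Proof.
move=> mB mD DA.
have nuD_ge0 : 0 <= restr_norm pi A D.
  by rewrite lee_fin divr_ge0 // fine_ge0.
have := reverse_minorization balance (ltW c0_gt0) minorization mD mB nuD_ge0.
rewrite (QSD_survival qsd) //; apply: le_trans; rewrite /restr_norm setIidr //.
rewrite -(probability_fineK pi mB) -(probability_fineK pi mD) -!EFinM.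
by rewrite lee_fin /K le_eqVlt; apply/orP; left; apply/eqP; ring.
Qed.

(* Below any threshold a < K(B), the set where P_t0(., B) <= a is nu1-null:
   it is pi-null inside A by the density bound, nu1 is dominated by pi, and
   nu1 does not charge the complement of A. *)
Lemma nu1_below_threshold B (a : R) : measurable B -> (a < K B)%R ->
  nu1 [set y | P t0 y B <= a%:E] = 0.
Proof.
move=> mB aK; set S := [set y | P t0 y B <= a%:E].
have mf : measurable_fun setT (fun y => P t0 y B) := measurable_kernel _ _ mB.
have mS : measurable S by rewrite -[S]setTI; exact: emeasurable_fun_infty_c.
have mAS : measurable (A `&` S) by exact: measurableI.
have pi_AS : pi (A `&` S) = 0.
  apply: (measure0_of_integral_bound pi (f := fun y => P t0 y B) mAS _ _ _ aK)
    => //.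
  - exact: le_lt_trans (probability_le1 pi mAS) (ltey _).
  - exact: measurable_funS mf.
  - by move=> y [].
  - exact: density_lower_bound.
have nu1_AS : nu1 (A `&` S) = 0.
  apply/eqP; rewrite eq_le measure_ge0 andbT.
  rewrite -(lee_pmul2l (x := c1%:E)) // mule0 -pi_AS; exact: nu1_le_pi.
apply/eqP; rewrite eq_le measure_ge0 andbT.
have S_sub : S `<=` (A `&` S) `|` ~` A.
  by move=> y Sy; have [Ay|nAy] := pselect (A y); [left|right].
have mU : measurable ((A `&` S) `|` ~` A) by exact: measurableU mAS (measurableC mA).
have : nu1 S <= nu1 (A `&` S) + nu1 (~` A).
  apply: le_trans (measureU2 nu1 mAS (measurableC mA)).
  by apply: le_measure; rewrite ?inE.
by rewrite nu1_AS nu1_A adde0.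
Qed.

(* Dobrushin at t1 followed by the bound P_t0(., B) >= K(B), valid nu1-a.e.,
   gives P_{t0+t1}(x, B) >= K(B) c1 P_t1(x, X). *)
Lemma DRD_lower_bound x B : measurable B ->
  (K B)%:E * (c1%:E * P t1 x setT) <= P (t0 + t1) x B.
Proof.
move=> mB; have KB_ge0 : (0 <= K B)%R.
  have /andP[/ltW Ft0_ge0 _] := QSD_survival_range qsd _ time_t0.
  by rewrite /K divr_ge0 ?mulr_ge0 // ?(ltW c0_gt0) //; exact: fine_ge0.
have [KB0|KB_neq0] := eqVneq (K B) 0%R; first by rewrite KB0 mul0e.
have KB_gt0 : (0 < K B)%R by rewrite lt_neqAle eq_sym KB_neq0.
apply/lee_mul01Pr; first by rewrite !mule_ge0 // lee_fin ltW.
move=> r /andP[r_gt0 r_lt1]; set a := (r * K B)%R.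
have a_ge0 : (0 <= a)%R by rewrite mulr_ge0 // ltW.
have aK : (a < K B)%R by rewrite /a gtr_pMl.
set S := [set y | P t0 y B <= a%:E].
have mf : measurable_fun setT (fun y => P t0 y B) := measurable_kernel _ _ mB.
have mS : measurable S by rewrite -[S]setTI; exact: emeasurable_fun_infty_c.
have nu1_Sc : nu1 (~` S) = 1.
  by rewrite probability_setC // nu1_below_threshold // sube0.
rewrite addrC semigroup.2 //.
apply: le_trans (le_measure_integral (P t1 x) (measurableC mS) mf _ a_ge0 _); first last.
- by move=> y /negP; rewrite -ltNge => /ltW.
- by [].
rewrite muleA -EFinM; apply: lee_wpmul2l; first by rewrite lee_fin.
by have [_ h] := dobrushin x; rewrite -[leLHS]mule1 -nu1_Sc h //; exact: measurableC.
Qed.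

End DRD_lower_bound.
Arguments DRD_lower_bound {R T disc P pi A c0 c1 t0 t1 nu1 Rk}.

Theorem mainTheorem4 (R : realType) (T : pseudoPMetricType R)
    (hT : hausdorff_space T) (disc : bool)
    (P : R -> R.-spker (borel_space T) ~> (borel_space T))
    (pi : probability (borel_space T) R) (A : set (borel_space T))
    (c0 c1 t0 t1 : R) :
  submarkov_semigroup disc P ->
  is_QSD disc P pi ->
  DRD disc P pi A c0 c1 t0 t1 ->
  let lam := lambda P pi in
  let t3 := t0 + t1 in
  let c3 := lam `^ t0 * c0 * c1 / fine (pi A) in
  forall (x : borel_space T) (B : set (borel_space T)), measurable B ->
    (c3%:E * P t3 x setT * pi B <= P t3 x B)%E.
Proof.
move=> semigroup qsd [mA [[nu1 [nu1_A [time_t1 [_ [c1_gt0 dobrushin]]]]]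
  [time_t0 [_ [c0_gt0 [Rk [balance minorization]]]]]]] lam t3 c3 x B mB.
have bound := DRD_lower_bound semigroup qsd mA time_t0 time_t1 c0_gt0 c1_gt0
  nu1_A dobrushin balance minorization x B mB.
rewrite -(probability_fineK pi mB) muleAC -EFinM.
apply: le_trans bound; rewrite muleA -EFinM.
have c3_ge0 : 0 <= c3.
  by rewrite /c3 divr_ge0 ?mulr_ge0 ?powR_ge0 ?fine_ge0 // ltW.
apply: lee_pmul => //; first by rewrite lee_fin mulr_ge0 // fine_ge0.
- rewrite lee_fin /c3.
  have -> : c0 * survival P pi t0 * fine (pi B) / fine (pi A) * c1 =
            survival P pi t0 * c0 * c1 / fine (pi A) * fine (pi B) by ring.
  rewrite ler_wpM2r ?fine_ge0 // ler_wpM2r ?invr_ge0 ?fine_ge0 //.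
  rewrite !ler_pM2r //; exact: lambda_powR_le_survival qsd _ time_t0.
- by rewrite /t3 addrC (semigroup_mass_antitone semigroup).
Qed.
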